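(* Let $\mathbb{C}$ be a normal category with pushouts of regular epimorphisms. Let $K\to U$ and $L\to V$ be kernels (normal monomorphisms) and $U\to A$, $V\to A$ monomorphisms, and let $U\cap V$ be their intersection. Write $K\cap V$ and $L\cap U$ for the intersections $K\cap(U\cap V)$ and $L\cap(U\cap V)$, which are kernels on $U\cap V$, and $J:=(K\cap V)\vee_{U\cap V}(L\cap U)$. Then $$\frac{K\,\underline{\vee}_U\,(U\cap V)}{K\,\underline{\vee}_U\,J}\;\cong\;\frac{U\cap V}{J}\;\cong\;\frac{L\,\underline{\vee}_V\,(U\cap V)}{L\,\underline{\vee}_V\,J},$$ where in particular $K\,\underline{\vee}_U\,J$ is a normal subobject of $K\,\underline{\vee}_U\,(U\cap V)$ and $L\,\underline{\vee}_V\,J$ a normal subobject of $L\,\underline{\vee}_V\,(U\cap V)$.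
   Context: A normal category is a pointed regular category in which every regular epimorphism is a normal epimorphism (a cokernel). For a kernel $K\to U$ with cokernel $p\colon U\to U/K$ and a subobject $X\to U$, the asymmetric join is $K\,\underline{\vee}_U\,X:=p^{-1}(p(X))$, the pullback along $p$ of the regular image of $X$; it is a subobject of $U$. For two kernels $K_1,K_2$ on the same object $B$ with cokernels $p_1,p_2$, $K_1\vee_B K_2$ is the kernel of the diagonal $q$ of the pushout of $p_1$ and $p_2$. $X/N$ denotes the cokernel of a kernel $N\to X$. Subobjects of $U\cap V$ are regarded as subobjects of $U$ and of $V$ via the inclusions. *)

From Stdlib Require Import Setoid.

Set Implicit Arguments.
Unset Strict Implicit.

Record Category := {
  Ob :> Type;
  Hom : Ob -> Ob -> Type;
  idm : forall A, Hom A A;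
  comp : forall A B D, Hom B D -> Hom A B -> Hom A D;
  comp_id_l : forall A B (f : Hom A B), comp (idm B) f = f;
  comp_id_r : forall A B (f : Hom A B), comp f (idm A) = f;
  comp_assoc : forall A B D E (h : Hom D E) (g : Hom B D) (f : Hom A B),
      comp h (comp g f) = comp (comp h g) f
}.

Arguments Hom {c} _ _.
Arguments idm {c} _.
Arguments comp {c A B D} _ _.

Notation "g ∘ f" := (comp g f) (at level 40, left associativity).

Section Basic.
Variable C : Category.

Definition Mono {A B : C} (f : Hom A B) : Prop :=
  forall X (g h : Hom X A), f ∘ g = f ∘ h -> g = h.

Definition Isomorphic (A B : C) : Prop :=
  exists (f : Hom A B) (g : Hom B A), g ∘ f = idm A /\ f ∘ g = idm B.

Definition IsTerminal (T : C) : Prop :=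
  forall A : C, exists f : Hom A T, forall g : Hom A T, g = f.

Definition IsPullback {A B D P : C} (f : Hom A D) (g : Hom B D)
    (p1 : Hom P A) (p2 : Hom P B) : Prop :=
  f ∘ p1 = g ∘ p2 /\
  forall Q (q1 : Hom Q A) (q2 : Hom Q B), f ∘ q1 = g ∘ q2 ->
    exists u : Hom Q P, p1 ∘ u = q1 /\ p2 ∘ u = q2 /\
      forall v : Hom Q P, p1 ∘ v = q1 -> p2 ∘ v = q2 -> v = u.

Definition IsPushout {A B1 B2 P : C} (f1 : Hom A B1) (f2 : Hom A B2)
    (i1 : Hom B1 P) (i2 : Hom B2 P) : Prop :=
  i1 ∘ f1 = i2 ∘ f2 /\
  forall Q (q1 : Hom B1 Q) (q2 : Hom B2 Q), q1 ∘ f1 = q2 ∘ f2 ->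
    exists u : Hom P Q, u ∘ i1 = q1 /\ u ∘ i2 = q2 /\
      forall v : Hom P Q, v ∘ i1 = q1 -> v ∘ i2 = q2 -> v = u.

Definition IsCoequalizer {A B Q : C} (f g : Hom A B) (e : Hom B Q) : Prop :=
  e ∘ f = e ∘ g /\
  forall X (h : Hom B X), h ∘ f = h ∘ g ->
    exists u : Hom Q X, u ∘ e = h /\ forall v : Hom Q X, v ∘ e = h -> v = u.

Definition RegularEpi {B Q : C} (e : Hom B Q) : Prop :=
  exists (A : C) (f g : Hom A B), IsCoequalizer f g e.

Definition RegularCat : Prop :=
  (exists T : C, IsTerminal T) /\
  (forall A B D (f : Hom A D) (g : Hom B D),
      exists P (p1 : Hom P A) (p2 : Hom P B), IsPullback f g p1 p2) /\
  (forall A B (f : Hom A B),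
      exists I (e : Hom A I) (m : Hom I B), RegularEpi e /\ Mono m /\ m ∘ e = f) /\
  (forall A B D P (f : Hom A D) (g : Hom B D) (p1 : Hom P A) (p2 : Hom P B),
      IsPullback f g p1 p2 -> RegularEpi f -> RegularEpi p2).

End Basic.

Record PointedCat := {
  pcat :> Category;
  zero_ob : pcat;
  to_zero : forall A : pcat, Hom A zero_ob;
  from_zero : forall A : pcat, Hom zero_ob A;
  to_zero_unique : forall A (f : Hom A zero_ob), f = to_zero A;
  from_zero_unique : forall A (f : Hom zero_ob A), f = from_zero A
}.

Section Pointed.
Variable C : PointedCat.

Definition zmor (A B : C) : Hom A B := @from_zero C B ∘ @to_zero C A.

Definition IsKernel {A B K : C} (f : Hom A B) (k : Hom K A) : Prop :=
  f ∘ k = zmor K B /\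
  forall X (h : Hom X A), f ∘ h = zmor X B ->
    exists u : Hom X K, k ∘ u = h /\ forall v : Hom X K, k ∘ v = h -> v = u.

Definition IsCokernel {A B Q : C} (f : Hom A B) (q : Hom B Q) : Prop :=
  q ∘ f = zmor A Q /\
  forall X (h : Hom B X), h ∘ f = zmor A X ->
    exists u : Hom Q X, u ∘ q = h /\ forall v : Hom Q X, v ∘ q = h -> v = u.

Definition NormalMono {K A : C} (k : Hom K A) : Prop :=
  exists (B : C) (f : Hom A B), IsKernel f k.

Definition NormalEpi {B Q : C} (e : Hom B Q) : Prop :=
  exists (A : C) (f : Hom A B), IsCokernel f e.

Definition NormalCat : Prop :=
  RegularCat C /\ forall (B Q : C) (e : Hom B Q), RegularEpi e -> NormalEpi e.

Definition HasPushoutsOfRegEpis : Prop :=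
  forall (A B1 B2 : C) (e1 : Hom A B1) (e2 : Hom A B2), RegularEpi e1 -> RegularEpi e2 ->
    exists P (i1 : Hom B1 P) (i2 : Hom B2 P), IsPushout e1 e2 i1 i2.

(** [j : Jo -> U] represents the asymmetric join [K ⊻_U X = p^{-1}(p(X))] of the
    kernel [k : K -> U] and the subobject [x : X -> U], where [p] is a cokernel
    of [k], [p ∘ x = m ∘ e] is the (regular epi, mono) factorisation giving the
    regular image of [X], and [j] is the pullback of [m] along [p]. *)
Definition IsAsymJoin {K X U Jo : C} (k : Hom K U) (x : Hom X U) (j : Hom Jo U) : Prop :=
  exists (Q I : C) (p : Hom U Q) (e : Hom X I) (m : Hom I Q) (j' : Hom Jo I),
    IsCokernel k p /\ RegularEpi e /\ Mono m /\ m ∘ e = p ∘ x /\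
    IsPullback m p j' j.

(** [j : Jo -> B] represents the join [K1 ∨_B K2] of kernels [k1], [k2] on [B]:
    the kernel of the diagonal of the pushout of their cokernels. *)
Definition IsKernelJoin {K1 K2 B Jo : C} (k1 : Hom K1 B) (k2 : Hom K2 B) (j : Hom Jo B) : Prop :=
  exists (Q1 Q2 P : C) (p1 : Hom B Q1) (p2 : Hom B Q2) (i1 : Hom Q1 P) (i2 : Hom Q2 P),
    IsCokernel k1 p1 /\ IsCokernel k2 p2 /\ IsPushout p1 p2 i1 i2 /\
    IsKernel (i1 ∘ p1) j.

End Pointed.


(* Fix a cokernel p : U -> U/K and let I, I' be the regular images of U ∩ V
   and of J in U/K, so that K ⊻_U (U ∩ V) and K ⊻_U J are the pullbacks of
   I and I' along p.  The kernel of U ∩ V -> I is K ∩ V, which lies in J, so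
   the quotient map r : U ∩ V -> (U ∩ V)/J factors through I as rb.  Since
   regular epis are pullback-stable, the image I' -> I of the normal
   subobject J is exactly the kernel of rb, and rb is its cokernel.  Pulling
   this exact sequence back along the normal epi K ⊻_U (U ∩ V) -> I yields
   K ⊻_U J -> K ⊻_U (U ∩ V) -> (U ∩ V)/J.  The same argument applies to L. *)

Set Implicit Arguments.
Unset Strict Implicit.

Section Pointed.
Variable C : PointedCat.

Definition Epi {A B : C} (e : Hom A B) : Prop :=
  forall X (g h : Hom B X), g ∘ e = h ∘ e -> g = h.

Lemma zmor_comp (A B D : C) (f : Hom A B) : zmor B D ∘ f = zmor A D.
Proof.
  unfold zmor. rewrite <- comp_assoc, (to_zero_unique (to_zero B ∘ f)). reflexivity.
Qed.

Lemma comp_zmor (A B D : C) (g : Hom B D) : g ∘ zmor A B = zmor A D.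
Proof.
  unfold zmor. rewrite comp_assoc, (from_zero_unique (g ∘ from_zero B)). reflexivity.
Qed.

Lemma mono_of_comp (A B D : C) (f : Hom A B) (g : Hom B D) : Mono (g ∘ f) -> Mono f.
Proof.
  intros Hgf X x y E. apply Hgf. rewrite <- !comp_assoc, E. reflexivity.
Qed.

Lemma section_mono (A B : C) (f : Hom A B) (g : Hom B A) : g ∘ f = idm A -> Mono f.
Proof.
  intros Egf. apply (mono_of_comp (g := g)). rewrite Egf.
  intros X x y E. rewrite !comp_id_l in E. exact E.
Qed.

Lemma comp_mono (A B D : C) (f : Hom A B) (g : Hom B D) : Mono f -> Mono g -> Mono (g ∘ f).
Proof.
  intros Hf Hg X x y E. apply Hf, Hg. rewrite !comp_assoc. exact E.
Qed.

Lemma comp_epi (A B D : C) (f : Hom A B) (g : Hom B D) : Epi f -> Epi g -> Epi (g ∘ f).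
Proof.
  intros Hf Hg X x y E. apply Hg, Hf. rewrite <- !comp_assoc. exact E.
Qed.

Lemma epi_of_comp (A B D : C) (f : Hom A B) (g : Hom B D) : Epi (g ∘ f) -> Epi g.
Proof.
  intros Hgf X x y E. apply Hgf. rewrite !comp_assoc, E. reflexivity.
Qed.

Lemma cokernel_epi (A B Q : C) (f : Hom A B) (q : Hom B Q) : IsCokernel f q -> Epi q.
Proof.
  intros [Hqf Hq] X g h E.
  destruct (Hq X (g ∘ q)) as [w [_ Hw]].
  { rewrite <- comp_assoc, Hqf. apply comp_zmor. }
  rewrite (Hw g eq_refl), (Hw h (eq_sym E)). reflexivity.
Qed.

Lemma normal_epi_epi (B Q : C) (e : Hom B Q) : NormalEpi e -> Epi e.
Proof. intros (A & f & Hf). exact (cokernel_epi Hf). Qed.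

Lemma regular_epi_epi (B Q : C) (e : Hom B Q) : RegularEpi e -> Epi e.
Proof.
  intros (A & f & g & Hfg & He) X x y E.
  destruct (He X (x ∘ e)) as [w [_ Hw]].
  { rewrite <- !comp_assoc, Hfg. reflexivity. }
  rewrite (Hw x eq_refl), (Hw y (eq_sym E)). reflexivity.
Qed.

Lemma cokernel_regular_epi (A B Q : C) (f : Hom A B) (q : Hom B Q) :
  IsCokernel f q -> RegularEpi q.
Proof.
  intros [Hqf Hq]. exists A, f, (zmor A B). split.
  - rewrite Hqf, comp_zmor. reflexivity.
  - intros X h E. apply Hq. rewrite E, comp_zmor. reflexivity.
Qed.

Lemma kernel_mono (A B K : C) (f : Hom A B) (k : Hom K A) : IsKernel f k -> Mono k.
Proof.
  intros [Hfk Hk] X g h E.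
  destruct (Hk X (k ∘ g)) as [w [_ Hw]].
  { rewrite comp_assoc, Hfk. apply zmor_comp. }
  rewrite (Hw g eq_refl), (Hw h (eq_sym E)). reflexivity.
Qed.

Lemma kernel_of_cokernel (K A Q : C) (k : Hom K A) (q : Hom A Q) :
  NormalMono k -> IsCokernel k q -> IsKernel q k.
Proof.
  intros (B & f & Hfk & Hk) Hq. split; [apply Hq|].
  intros X h E.
  destruct (proj2 Hq B f Hfk) as [f' [Ef _]].
  apply Hk. rewrite <- Ef, <- comp_assoc, E. apply comp_zmor.
Qed.

Lemma normal_epi_cokernel_of_kernel (K B Q : C) (k : Hom K B) (e : Hom B Q) :
  NormalEpi e -> IsKernel e k -> IsCokernel k e.
Proof.
  intros (A & f & Hef & He) Hk. split; [apply Hk|].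
  intros X h Eh. apply He.
  destruct (proj2 Hk A f Hef) as [w [Ew _]].
  rewrite <- Ew, comp_assoc, Eh. apply zmor_comp.
Qed.

Lemma cokernel_unique (A B Q1 Q2 : C) (f : Hom A B) (q1 : Hom B Q1) (q2 : Hom B Q2) :
  IsCokernel f q1 -> IsCokernel f q2 ->
  exists (φ : Hom Q1 Q2) (ψ : Hom Q2 Q1),
    φ ∘ q1 = q2 /\ ψ ∘ φ = idm Q1 /\ φ ∘ ψ = idm Q2.
Proof.
  intros H1 H2.
  destruct (proj2 H1 Q2 q2 (proj1 H2)) as [φ [Eφ _]].
  destruct (proj2 H2 Q1 q1 (proj1 H1)) as [ψ [Eψ _]].
  exists φ, ψ. split; [exact Eφ|split].
  - apply (cokernel_epi H1). rewrite <- comp_assoc, Eφ, Eψ, comp_id_l. reflexivity.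
  - apply (cokernel_epi H2). rewrite <- comp_assoc, Eψ, Eφ, comp_id_l. reflexivity.
Qed.

Lemma cokernel_iso (A B Q1 Q2 : C) (f : Hom A B) (q1 : Hom B Q1) (q2 : Hom B Q2) :
  IsCokernel f q1 -> IsCokernel f q2 -> Isomorphic Q1 Q2.
Proof.
  intros H1 H2. destruct (cokernel_unique H1 H2) as (φ & ψ & _ & E1 & E2).
  exists φ, ψ. split; assumption.
Qed.

Lemma Isomorphic_sym (A B : C) : Isomorphic A B -> Isomorphic B A.
Proof. intros (f & g & E1 & E2). exists g, f. split; assumption. Qed.

Lemma regular_epi_mono_lift (A B X D : C) (e : Hom A B) (m : Hom X D)
    (x : Hom A X) (y : Hom B D) :
  RegularEpi e -> Mono m -> m ∘ x = y ∘ e -> exists d, d ∘ e = x /\ m ∘ d = y.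
Proof.
  intros He Hm E. pose proof He as (Z & f & g & Hfg & Hcoeq).
  destruct (Hcoeq X x) as [d [Ed _]].
  { apply Hm. rewrite !comp_assoc, E, <- !comp_assoc, Hfg. reflexivity. }
  exists d. split; [exact Ed|].
  apply (regular_epi_epi He). rewrite <- comp_assoc, Ed. exact E.
Qed.

Lemma pullback_sym (A B D P : C) (f : Hom A D) (g : Hom B D) (p1 : Hom P A) (p2 : Hom P B) :
  IsPullback f g p1 p2 -> IsPullback g f p2 p1.
Proof.
  intros [Hsq Hpb]. split; [auto|].
  intros Q q1 q2 E. destruct (Hpb Q q2 q1 (eq_sym E)) as (w & E1 & E2 & Hw).
  exists w. split; [|split]; auto.
Qed.

Lemma pullback_ext (A B D P X : C) (f : Hom A D) (g : Hom B D) (p1 : Hom P A) (p2 : Hom P B)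
    (x y : Hom X P) :
  IsPullback f g p1 p2 -> p1 ∘ x = p1 ∘ y -> p2 ∘ x = p2 ∘ y -> x = y.
Proof.
  intros [Hsq Hpb] E1 E2.
  destruct (Hpb X (p1 ∘ x) (p2 ∘ x)) as (w & _ & _ & Hw).
  { rewrite !comp_assoc, Hsq. reflexivity. }
  rewrite (Hw x eq_refl eq_refl), (Hw y (eq_sym E1) (eq_sym E2)). reflexivity.
Qed.

Lemma pullback_mono (A B D P : C) (f : Hom A D) (g : Hom B D) (p1 : Hom P A) (p2 : Hom P B) :
  IsPullback f g p1 p2 -> Mono f -> Mono p2.
Proof.
  intros Hpb Hf X x y E. apply (pullback_ext Hpb); [|exact E].
  apply Hf. rewrite !comp_assoc, (proj1 Hpb), <- !comp_assoc, E. reflexivity.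
Qed.

Lemma pullback_postcomp_mono (A B D E : C) (f : Hom A D) (g : Hom B D) (φ : Hom D E)
    (P : C) (p1 : Hom P A) (p2 : Hom P B) :
  IsPullback f g p1 p2 -> Mono φ -> IsPullback (φ ∘ f) (φ ∘ g) p1 p2.
Proof.
  intros [Hsq Hpb] Hφ. split.
  - rewrite <- !comp_assoc, Hsq. reflexivity.
  - intros Q q1 q2 Eq. apply Hpb, Hφ. rewrite !comp_assoc. exact Eq.
Qed.

Lemma pullback_cancel (A A' B D P Q : C) (f : Hom A D) (g : Hom B D) (p1 : Hom P A)
    (p2 : Hom P B) (h : Hom A' A) (q1 : Hom Q A') (q2 : Hom Q B) (σ : Hom Q P) :
  IsPullback f g p1 p2 -> IsPullback (f ∘ h) g q1 q2 ->
  p1 ∘ σ = h ∘ q1 -> p2 ∘ σ = q2 -> IsPullback h p1 q1 σ.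
Proof.
  intros Hin Hout E1 E2. split; [auto|].
  intros X x y Exy.
  destruct (proj2 Hout X x (p2 ∘ y)) as (w & Ew1 & Ew2 & Hw).
  { rewrite <- comp_assoc, Exy, !comp_assoc, (proj1 Hin). reflexivity. }
  exists w. split; [exact Ew1|split].
  - apply (pullback_ext Hin).
    + rewrite comp_assoc, E1, <- comp_assoc, Ew1. exact Exy.
    + rewrite comp_assoc, E2. exact Ew2.
  - intros v Ev1 Ev2. apply Hw; [exact Ev1|].
    rewrite <- E2, <- comp_assoc, Ev2. reflexivity.
Qed.

Lemma pullback_kernel (I' I R T S : C) (d : Hom I' I) (c : Hom I R) (h : Hom T I)
    (q1 : Hom S I') (σ : Hom S T) :
  IsKernel c d -> IsPullback d h q1 σ -> IsKernel (c ∘ h) σ.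
Proof.
  intros Hd Hpb. split.
  - rewrite <- comp_assoc, <- (proj1 Hpb), comp_assoc, (proj1 Hd). apply zmor_comp.
  - intros X x Ex. rewrite <- comp_assoc in Ex.
    destruct (proj2 Hd X (h ∘ x) Ex) as [y [Ey _]].
    destruct (proj2 Hpb X y x Ey) as (w & _ & Ew & _).
    exists w. split; [exact Ew|].
    intros v Ev. apply (pullback_mono Hpb (kernel_mono Hd)). rewrite Ev, Ew. reflexivity.
Qed.

Lemma pullback_cokernel (I' I R T S : C) (d : Hom I' I) (c : Hom I R) (h : Hom T I)
    (q1 : Hom S I') (σ : Hom S T) :
  IsCokernel d c -> NormalEpi h -> Epi q1 -> IsPullback d h q1 σ -> IsCokernel σ (c ∘ h).
Proof.
  intros Hc Hh Hq1 Hpb. split.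
  - rewrite <- comp_assoc, <- (proj1 Hpb), comp_assoc, (proj1 Hc). apply zmor_comp.
  - intros X x Ex. pose proof Hh as (F & f & Hhf & Hcoker).
    destruct (proj2 Hpb F (zmor F I') f) as (w & _ & Ew & _).
    { rewrite Hhf. apply comp_zmor. }
    destruct (Hcoker X x) as [x' [Ex' _]].
    { rewrite <- Ew, comp_assoc, Ex. apply zmor_comp. }
    destruct (proj2 Hc X x') as [x'' [Ex'' _]].
    { apply Hq1. rewrite <- comp_assoc, (proj1 Hpb), comp_assoc, Ex', Ex, !zmor_comp.
      reflexivity. }
    exists x''. split.
    + rewrite comp_assoc, Ex''. exact Ex'.
    + intros v Ev. apply (comp_epi (normal_epi_epi Hh) (cokernel_epi Hc)).
      rewrite Ev, comp_assoc, Ex'', Ex'. reflexivity.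
Qed.

(* With [m ∘ e] the image factorisation of [p ∘ x], [e] has the same kernel
   as [p ∘ x], namely the pullback [kw] of [k] along [x]. *)
Lemma kernel_image_factor (K U Q W I KV : C) (k : Hom K U) (p : Hom U Q) (x : Hom W U)
    (ka : Hom KV K) (kw : Hom KV W) (e : Hom W I) (m : Hom I Q) :
  IsKernel p k -> IsPullback k x ka kw -> Mono m -> m ∘ e = p ∘ x -> IsKernel e kw.
Proof.
  intros Hk Hpb Hm Hme. split.
  - apply Hm. rewrite comp_zmor, comp_assoc, Hme, <- comp_assoc, <- (proj1 Hpb),
      comp_assoc, (proj1 Hk). apply zmor_comp.
  - intros X h Eh.
    destruct (proj2 Hk X (x ∘ h)) as [y [Ey _]].
    { rewrite comp_assoc, <- Hme, <- comp_assoc, Eh. apply comp_zmor. }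
    destruct (proj2 Hpb X y h Ey) as (w & _ & Ew & _).
    exists w. split; [exact Ew|].
    intros v Ev. apply (pullback_mono Hpb (kernel_mono Hk)). rewrite Ev, Ew. reflexivity.
Qed.

Lemma asym_join_cokernel (K X U Q Jo : C) (k : Hom K U) (x : Hom X U) (j : Hom Jo U)
    (p : Hom U Q) :
  IsAsymJoin k x j -> IsCokernel k p ->
  exists (I : C) (e : Hom X I) (m : Hom I Q) (j' : Hom Jo I),
    RegularEpi e /\ Mono m /\ m ∘ e = p ∘ x /\ IsPullback m p j' j.
Proof.
  intros (Q' & I & p' & e & m & j' & Hp' & He & Hm & Hme & Hpb) Hp.
  destruct (cokernel_unique Hp' Hp) as (φ & ψ & Eφ & Eψφ & _).
  pose proof (section_mono Eψφ) as Hφ.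
  exists I, e, (φ ∘ m), j'. split; [exact He|split; [|split]].
  - exact (comp_mono Hm Hφ).
  - rewrite <- comp_assoc, Hme, comp_assoc, Eφ. reflexivity.
  - rewrite <- Eφ. exact (pullback_postcomp_mono Hpb Hφ).
Qed.

Lemma image_comp_zero (J W I I' R : C) (jW : Hom J W) (r : Hom W R) (e : Hom W I)
    (e' : Hom J I') (d : Hom I' I) (rb : Hom I R) :
  r ∘ jW = zmor J R -> Epi e' -> rb ∘ e = r -> d ∘ e' = e ∘ jW -> rb ∘ d = zmor I' R.
Proof.
  intros Hr He' Erb Ed. apply He'.
  rewrite <- comp_assoc, Ed, comp_assoc, Erb, Hr, zmor_comp. reflexivity.
Qed.

(* Let [d ∘ e'] be the image factorisation of [e ∘ jW], and [rb ∘ e = r].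
   The next two lemmas say that [J -> W -> R] induces the exact sequence
   [I' -> I -> R] on images. *)
Lemma image_cokernel (J W I I' R : C) (jW : Hom J W) (r : Hom W R) (e : Hom W I)
    (e' : Hom J I') (d : Hom I' I) (rb : Hom I R) :
  IsCokernel jW r -> Epi e -> Epi e' -> rb ∘ e = r -> d ∘ e' = e ∘ jW -> IsCokernel d rb.
Proof.
  intros Hr He He' Erb Ed. split; [exact (image_comp_zero (proj1 Hr) He' Erb Ed)|].
  intros X h Eh.
  destruct (proj2 Hr X (h ∘ e)) as [h' [Eh' _]].
  { rewrite <- comp_assoc, <- Ed, comp_assoc, Eh. apply zmor_comp. }
  assert (Eh'rb : h' ∘ rb = h).
  { apply He. rewrite <- comp_assoc, Erb. exact Eh'. }
  exists h'. split; [exact Eh'rb|].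
  intros v Ev.
  assert (Hrb : Epi rb) by (apply (epi_of_comp (f := e)); rewrite Erb; exact (cokernel_epi Hr)).
  apply Hrb. rewrite Ev, Eh'rb. reflexivity.
Qed.

Section Regular.
Hypothesis HR : RegularCat C.

Lemma image_kernel (J W I I' R : C) (jW : Hom J W) (r : Hom W R) (e : Hom W I)
    (e' : Hom J I') (d : Hom I' I) (rb : Hom I R) :
  IsKernel r jW -> RegularEpi e -> RegularEpi e' -> Mono d ->
  rb ∘ e = r -> d ∘ e' = e ∘ jW -> IsKernel rb d.
Proof.
  destruct HR as (_ & Hpb_ex & _ & Hstab).
  intros Hj He He' Hd Erb Ed.
  split; [exact (image_comp_zero (proj1 Hj) (regular_epi_epi He') Erb Ed)|].
  intros X y Ey.
  destruct (Hpb_ex _ _ _ e y) as (P & π1 & π2 & Hπ).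
  destruct (proj2 Hj P π1) as [q [Eq _]].
  { rewrite <- Erb, <- comp_assoc, (proj1 Hπ), comp_assoc, Ey. apply zmor_comp. }
  destruct (regular_epi_mono_lift (x := e' ∘ q) (y := y) (Hstab _ _ _ _ _ _ _ _ Hπ He) Hd)
    as [w [_ Ew]].
  { rewrite comp_assoc, Ed, <- comp_assoc, Eq. exact (proj1 Hπ). }
  exists w. split; [exact Ew|].
  intros v Ev. apply Hd. rewrite Ev, Ew. reflexivity.
Qed.

End Regular.

Section Normal.
Hypothesis HN : NormalCat C.

(* The single-side form of the theorem: [x : W -> U] is any morphism, [J] a
   normal subobject of [W] containing [x^{-1}(K)]. *)
Lemma asym_join_quotient (U K W J KV T S R : C) (k : Hom K U) (x : Hom W U)
    (ka : Hom KV K) (kw : Hom KV W) (jW : Hom J W) (t : Hom T U) (s : Hom S U) (r : Hom W R) :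
  NormalMono k -> IsPullback k x ka kw -> NormalMono jW -> (exists z, jW ∘ z = kw) ->
  IsAsymJoin k x t -> IsAsymJoin k (x ∘ jW) s -> IsCokernel jW r ->
  exists σ : Hom S T, t ∘ σ = s /\ NormalMono σ /\
    forall Q (c : Hom T Q), IsCokernel σ c -> Isomorphic Q R.
Proof.
  destruct HN as [HR Hnormal]. pose proof HR as (_ & _ & _ & Hstab).
  intros Hk HKV HjW [z Ez] HT HS Hr.
  destruct HT as (Q & I & p & e & m & j & Hp & He & Hm & Hme & Hpb).
  destruct (asym_join_cokernel HS Hp) as (I' & e' & m' & j' & He' & Hm' & Hme' & Hpb').
  destruct (regular_epi_mono_lift (x := e ∘ jW) (y := m') He' Hm) as [d [Ed Emd]].
  { rewrite comp_assoc, Hme, Hme', comp_assoc. reflexivity. }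
  assert (Hd : Mono d) by (apply (mono_of_comp (g := m)); rewrite Emd; exact Hm').
  assert (Hcoke : IsCokernel kw e).
  { apply (normal_epi_cokernel_of_kernel (Hnormal _ _ _ He)).
    exact (kernel_image_factor (kernel_of_cokernel Hk Hp) HKV Hm Hme). }
  destruct (proj2 Hcoke R r) as [rb [Erb _]].
  { rewrite <- Ez, comp_assoc, (proj1 Hr). apply zmor_comp. }
  assert (Hker : IsKernel rb d)
    by exact (image_kernel HR (kernel_of_cokernel HjW Hr) He He' Hd Erb Ed).
  assert (Hcok : IsCokernel d rb)
    by exact (image_cokernel Hr (regular_epi_epi He) (regular_epi_epi He') Erb Ed).
  destruct (proj2 Hpb S (d ∘ j') s) as (σ & Eσj & Eσt & _).
  { rewrite comp_assoc, Emd. exact (proj1 Hpb'). }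
  assert (Hsq : IsPullback d j j' σ).
  { apply (pullback_cancel (q2 := s) Hpb); [rewrite Emd; exact Hpb'|exact Eσj|exact Eσt]. }
  assert (Hj : RegularEpi j)
    by exact (Hstab _ _ _ _ _ _ _ _ (pullback_sym Hpb) (cokernel_regular_epi Hp)).
  assert (Hj' : RegularEpi j')
    by exact (Hstab _ _ _ _ _ _ _ _ (pullback_sym Hpb') (cokernel_regular_epi Hp)).
  exists σ. split; [exact Eσt|split].
  - exists R, (rb ∘ j). exact (pullback_kernel Hker Hsq).
  - intros Q1 c Hc. apply (cokernel_iso (q2 := rb ∘ j) Hc).
    exact (pullback_cokernel Hcok (Hnormal _ _ _ Hj) (regular_epi_epi Hj') Hsq).
Qed.

End Normal.

Lemma kernel_join_normal (K1 K2 B Jo : C) (k1 : Hom K1 B) (k2 : Hom K2 B) (j : Hom Jo B) :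
  IsKernelJoin k1 k2 j -> NormalMono j.
Proof. intros (Q1 & Q2 & P & p1 & p2 & i1 & i2 & _ & _ & _ & Hj). exists P, (i1 ∘ p1). exact Hj. Qed.

Lemma kernel_join_ub_l (K1 K2 B Jo : C) (k1 : Hom K1 B) (k2 : Hom K2 B) (j : Hom Jo B) :
  IsKernelJoin k1 k2 j -> exists z, j ∘ z = k1.
Proof.
  intros (Q1 & Q2 & P & p1 & p2 & i1 & i2 & Hp1 & _ & _ & Hj).
  destruct (proj2 Hj K1 k1) as [z [Ez _]].
  { rewrite <- comp_assoc, (proj1 Hp1). apply comp_zmor. }
  exists z. exact Ez.
Qed.

Lemma kernel_join_ub_r (K1 K2 B Jo : C) (k1 : Hom K1 B) (k2 : Hom K2 B) (j : Hom Jo B) :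
  IsKernelJoin k1 k2 j -> exists z, j ∘ z = k2.
Proof.
  intros (Q1 & Q2 & P & p1 & p2 & i1 & i2 & _ & Hp2 & Hpo & Hj).
  destruct (proj2 Hj K2 k2) as [z [Ez _]].
  { rewrite (proj1 Hpo), <- comp_assoc, (proj1 Hp2). apply comp_zmor. }
  exists z. exact Ez.
Qed.

End Pointed.

Theorem corollary3p4 (C : PointedCat)
  (HN : NormalCat C) (HP : HasPushoutsOfRegEpis C)
  (A U V K L : C) (k : Hom K U) (l : Hom L V) (u : Hom U A) (v : Hom V A)
  (Hk : NormalMono k) (Hl : NormalMono l) (Hu : Mono u) (Hv : Mono v)
  (W : C) (a : Hom W U) (b : Hom W V) (HW : IsPullback u v a b)
  (KV : C) (ka : Hom KV K) (kw : Hom KV W) (HKV : IsPullback k a ka kw)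
  (LU : C) (lb : Hom LU L) (lw : Hom LU W) (HLU : IsPullback l b lb lw)
  (J : C) (jW : Hom J W) (HJ : IsKernelJoin kw lw jW)
  (T1 S1 : C) (t1 : Hom T1 U) (s1 : Hom S1 U)
  (HT1 : IsAsymJoin k a t1) (HS1 : IsAsymJoin k (a ∘ jW) s1)
  (T2 S2 : C) (t2 : Hom T2 V) (s2 : Hom S2 V)
  (HT2 : IsAsymJoin l b t2) (HS2 : IsAsymJoin l (b ∘ jW) s2)
  (R : C) (r : Hom W R) (Hr : IsCokernel jW r) :
  (exists σ1 : Hom S1 T1, t1 ∘ σ1 = s1 /\ NormalMono σ1 /\
     forall (Q1 : C) (c1 : Hom T1 Q1), IsCokernel σ1 c1 -> Isomorphic Q1 R) /\
  (exists σ2 : Hom S2 T2, t2 ∘ σ2 = s2 /\ NormalMono σ2 /\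
     forall (Q2 : C) (c2 : Hom T2 Q2), IsCokernel σ2 c2 -> Isomorphic R Q2).
Proof.
  split.
  - exact (asym_join_quotient HN Hk HKV (kernel_join_normal HJ) (kernel_join_ub_l HJ)
             HT1 HS1 Hr).
  - destruct (asym_join_quotient HN Hl HLU (kernel_join_normal HJ) (kernel_join_ub_r HJ)
                HT2 HS2 Hr) as (σ & Eσ & Hσ & Hiso).
    exists σ. split; [exact Eσ|split; [exact Hσ|]].
    intros Q c Hc. exact (Isomorphic_sym (Hiso Q c Hc)).
Qed.
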